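(* Let $\ell,d\ge0$ be integers, $n=2^\ell$, $m=2^d$, and $\lambda=m/n=2^{d-\ell}$. Let $a$ be an integer with $d\ge a\ge\max\{1,d-\ell\}$. Then there exist a positive integer $N$ and a set $S\subseteq\mathbb{F}_2^N\setminus\{0\}$ of $m$ distinct nonzero vectors such that, for a uniformly random linear map $h:\mathbb{F}_2^N\to\mathbb{F}_2^\ell$, \[ \Pr\left[|\{x\in S: h(x)=0\}|>2^a-2\right]\ge\gamma^2\lambda^a2^{-a^2}, \] where $\gamma:=\prod_{j=1}^\infty(1-2^{-j})$.
   Context: A uniformly random linear map is chosen uniformly among all linear maps $\mathbb{F}_2^N\to\mathbb{F}_2^\ell$. *)

From HB Require Import structures.
From mathcomp Require Import all_boot all_order all_algebra.
From mathcomp Require Import all_classical all_reals all_analysis.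
Set Implicit Arguments. Unset Strict Implicit. Unset Printing Implicit Defensive.
Import Order.TTheory GRing.Theory Num.Theory numFieldNormedType.Exports.
Local Open Scope ring_scope.

Definition gamma_const (R : realType) : R :=
  limn ((fun n : nat => \prod_(j < n) (1 - (2%:R ^+ j.+1)^-1 : R)) : R^nat).

(* A linear map h : F_2^N -> F_2^l is represented by its matrix A, with
   h x = x *m A (x a row vector). The uniform distribution on linear maps is
   the uniform distribution on 'M['F_2]_(N, l). *)
Definition prob_linmap (R : realType) (N l : nat)
  (E : 'M['F_2]_(N, l) -> bool) : R :=
  (#|[set A : 'M['F_2]_(N, l) | E A]|)%:R / (#|{: 'M['F_2]_(N, l)}|)%:R.

From HB Require Import structures.
From mathcomp Require Import all_boot all_order all_algebra.
From mathcomp Require Import all_classical all_reals all_analysis.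
From mathcomp Require Import ring zify.
Import Order.TTheory GRing.Theory Num.Theory numFieldNormedType.Exports.
Local Open Scope ring_scope.

(* Write d = r + a and l = r + t, and let S be the image of F_2^d in F_2^(d+1)
   under y |-> (y, 0) for y <> 0 and 0 |-> (0, 1): it consists of 2^d distinct
   nonzero vectors, and x *m [M; w] = y *m M for every nonzero y.  If the first
   d rows of the matrix of h have the form [X; K X] with X = [B C] and B an
   invertible r x r block, then (-y K, y) lies in the left kernel for every y,
   giving 2^a - 1 > 2^a - 2 kernel points in S.  The map (B, C, K, w) |-> [X; K X; w]
   is injective on such tuples, so the event has probability at least
   |GL_r(F_2)| 2^(rt + ar + l) / 2^((d+1) l) = (|GL_r(F_2)| / 2^(r^2)) 2^(-at),
   and |GL_r(F_2)| / 2^(r^2) is the r-th partial product of gamma, hence at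
   least gamma >= gamma^2; finally lambda^a 2^(-a^2) = 2^(-at). *)

Definition gamma_partial (R : realType) (n : nat) : R :=
  \prod_(j < n) (1 - (2%:R ^+ j.+1)^-1).

Section Gamma.
Variable R : realType.

Lemma gamma_factor_ge0 j : 0 <= 1 - (2%:R ^+ j.+1)^-1 :> R.
Proof. by rewrite subr_ge0 invf_le1 ?exprn_gt0 ?exprn_ege1 ?ler1n ?ltr0n. Qed.

Lemma gamma_partial_ge0 n : 0 <= gamma_partial R n.
Proof. by apply: prodr_ge0 => j _; exact: gamma_factor_ge0. Qed.

Lemma gamma_partial_nonincreasing : nonincreasing_seq (gamma_partial R).
Proof.
apply/nonincreasing_seqP => n; rewrite /gamma_partial big_ord_recr /=.
by rewrite ler_piMr ?gamma_partial_ge0 // gerBl invr_ge0 exprn_ge0.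
Qed.

Lemma gamma_partial_cvg : cvgn (gamma_partial R).
Proof.
apply: nonincreasing_is_cvgn; first exact: gamma_partial_nonincreasing.
by exists 0 => _ [n _ <-]; exact: gamma_partial_ge0.
Qed.

Lemma gamma_le_partial n : gamma_const R <= gamma_partial R n.
Proof.
exact: nonincreasing_cvgn_ge gamma_partial_nonincreasing gamma_partial_cvg n.
Qed.

Lemma gamma_ge0 : 0 <= gamma_const R.
Proof.
by apply: limr_ge gamma_partial_cvg _; apply: nearW; exact: gamma_partial_ge0.
Qed.

Lemma gamma_le1 : gamma_const R <= 1.
Proof. by have := gamma_le_partial 0; rewrite /gamma_partial big_ord0. Qed.

End Gamma.

Lemma card_unitmx_F2 r : #|[set B : 'M['F_2]_r | B \in unitmx]| =
  (2 ^ 'C(r, 2) * \prod_(j < r) (2 ^ j.+1 - 1))%N.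
Proof.
case: r => [|r].
  rewrite big_ord0 bin0n (_ : [set B | B \in unitmx] = [set: 'M['F_2]_0]%SET).
    by rewrite cardsT card_mx.
  by apply/setP => B; rewrite !inE [B]flatmx0 -(flatmx0 1%:M) unitmx1.
have -> : #|[set B : 'M['F_2]_r.+1 | B \in unitmx]| = #|'GL_r.+1['F_2]%g|.
  by rewrite cardsT /= card_sub; apply: eq_card => B; rewrite !inE.
by rewrite card_GL // card_Fp // big_add1 big_mkord.
Qed.

Lemma natr_card_unitmx_F2 (R : realType) r :
  (#|[set B : 'M['F_2]_r | B \in unitmx]|%:R : R) = 2%:R ^+ (r * r) * gamma_partial R r.
Proof.
rewrite card_unitmx_F2; elim: r => [|r IHr].
  by rewrite /gamma_partial !big_ord0 bin0n mulr1.
rewrite binS bin1 /gamma_partial !big_ord_recr /= -/(gamma_partial R r).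
rewrite expnD mulnACA natrM IHr natrM natrB ?expn_gt0 // !natrX.
have two_pow_neq0 k : (2%:R : R) ^+ k != 0 by rewrite expf_neq0 ?pnatr_eq0.
rewrite (_ : (r.+1 * r.+1 = r * r + r + r.+1)%N); last by ring.
by rewrite !exprD; field; rewrite two_pow_neq0.
Qed.

Section NonzeroEmbedding.
Variables (F : nzRingType) (k : nat).

Definition nz_embed (y : 'rV[F]_k) : 'rV[F]_(k + 1) :=
  if y == 0 then row_mx 0 (const_mx 1) else row_mx y 0.

Lemma const_mx1_neq0 : const_mx 1 != 0 :> 'rV[F]_1.
Proof. by apply/eqP => /matrixP /(_ 0 0); rewrite !mxE; apply/eqP; exact: oner_neq0. Qed.

Lemma nz_embed_neq0 y : nz_embed y != 0.
Proof.
rewrite /nz_embed; have [_|y_neq0] := eqVneq y 0; rewrite -(row_mx0 _ 1 k 1).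
  by apply/negP => /eqP /eq_row_mx [_ /eqP]; rewrite (negbTE const_mx1_neq0).
by apply/negP => /eqP /eq_row_mx [/eqP]; rewrite (negbTE y_neq0).
Qed.

Lemma nz_embed_inj : injective nz_embed.
Proof.
move=> y z; rewrite /nz_embed.
have [->|y_neq0] := eqVneq y 0; have [->|z_neq0] := eqVneq z 0 => // /eq_row_mx [].
- by move=> _ /eqP; rewrite (negbTE const_mx1_neq0).
- by move=> _ /esym /eqP; rewrite (negbTE const_mx1_neq0).
- by [].
Qed.

Lemma nz_embed_mul l y (M : 'M[F]_(k, l)) (w : 'rV[F]_l) :
  y != 0 -> nz_embed y *m col_mx M w = y *m M.
Proof. by rewrite /nz_embed => /negbTE ->; rewrite mul_row_col mul0mx addr0. Qed.

End NonzeroEmbedding.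

Arguments nz_embed {F k} y.

Definition nz_points k : {set 'rV['F_2]_(k + 1)} := nz_embed @: [set: 'rV['F_2]_k]%SET.

Lemma zero_notin_nz_points k : 0 \notin nz_points k.
Proof. by apply/imsetP => [[y _ /esym /eqP]]; apply/negP; exact: nz_embed_neq0. Qed.

Lemma card_nz_points k : #|nz_points k| = (2 ^ k)%N.
Proof. by rewrite card_imset ?cardsT ?card_mx ?card_Fp ?mul1n //; exact: nz_embed_inj. Qed.

Lemma mul_row_col_kernel (F : nzRingType) r a n
    (X : 'M[F]_(r, n)) (K : 'M[F]_(a, r)) (y : 'rV[F]_a) :
  row_mx (- (y *m K)) y *m col_mx X (K *m X) = 0.
Proof. by rewrite mul_row_col mulNmx mulmxA addNr. Qed.

Lemma card_kernel_nz_points_ge {r a n : nat}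
    (X : 'M['F_2]_(r, n)) (K : 'M['F_2]_(a, r)) (w : 'rV['F_2]_n) :
  (2 ^ a - 1 <=
   #|[set x in nz_points (r + a) | x *m col_mx (col_mx X (K *m X)) w == 0%R]|)%N.
Proof.
pose kernel_vector y := nz_embed (row_mx (- (y *m K)) y).
have kernel_vector_inj : injective kernel_vector.
  by move=> y z /nz_embed_inj /eq_row_mx [].
have -> : (2 ^ a - 1 = #|kernel_vector @: [set~ 0%R]|)%N.
  by rewrite card_imset // cardsC1 card_mx card_Fp // mul1n subn1.
apply/subset_leq_card/fintype.subsetP => x /imsetP [y]; rewrite !inE => y_neq0 ->.
rewrite /kernel_vector /nz_points imset_f ?inE //= nz_embed_mul ?mul_row_col_kernel //.
by apply: contra y_neq0 => /eqP /(congr1 rsubmx); rewrite row_mxKr linear0 => ->.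
Qed.

Lemma card_event_ge r a t : (1 <= a)%N ->
  (#|[set B : 'M['F_2]_r | B \in unitmx]| * 2 ^ (r * t) * 2 ^ (a * r) * 2 ^ (r + t) <=
   #|[set A : 'M['F_2]_(r + a + 1, r + t) |
      (2 ^ a - 2 < #|[set x in nz_points (r + a) | x *m A == 0%R]|)%N]|)%N.
Proof.
move=> a_gt0.
pose U := [set B : 'M['F_2]_r | B \in unitmx].
pose D := finset.setX (finset.setX (finset.setX U [set: 'M['F_2]_(r, t)]%SET)
  [set: 'M['F_2]_(a, r)]%SET) [set: 'rV['F_2]_(r + t)]%SET.
pose block (p : 'M['F_2]_r * 'M['F_2]_(r, t) * 'M['F_2]_(a, r) * 'rV['F_2]_(r + t)) :=
  let: (B, C, K, w) := p in col_mx (col_mx (row_mx B C) (K *m row_mx B C)) w.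
have block_inj : {in D &, injective block}.
  move=> [[[B C] K] w] [[[B' C'] K'] w'].
  rewrite !inE /= => /andP [/andP [/andP [uB _] _] _] _.
  move=> /eq_col_mx [/eq_col_mx [/eq_row_mx [<- <-]]].
  by rewrite !mul_mx_row => /eq_row_mx [/(can_inj (mulmxK uB)) -> _] ->.
have -> : (#|U| * 2 ^ (r * t) * 2 ^ (a * r) * 2 ^ (r + t) = #|block @: D|)%N.
  by rewrite card_in_imset // !cardsX !cardsT !card_mx !card_Fp // mul1n.
apply/subset_leq_card/fintype.subsetP => _ /imsetP [[[[B C] K] w] _ ->].
rewrite inE; apply: leq_trans (card_kernel_nz_points_ge (row_mx B C) K w).
have : (2 <= 2 ^ a)%N by rewrite -{1}(expn1 2) leq_pexp2l.
lia.
Qed.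

Lemma prob_linmap_F2 (R : realType) N l (E : 'M['F_2]_(N, l) -> bool) :
  prob_linmap R E = #|[set A | E A]|%:R / 2%:R ^+ (N * l).
Proof. by rewrite /prob_linmap card_mx card_Fp // natrX. Qed.

Lemma expr_ratio_pow_div (F : fieldType) (x : F) r a t : x != 0 ->
  (x ^+ (r + a) / x ^+ (r + t)) ^+ a / x ^+ (a * a) = (x ^+ (a * t))^-1.
Proof.
move=> x_neq0; rewrite !exprD expr_div_n !exprMn -!exprM [(t * a)%N]mulnC.
by field; rewrite !expf_neq0.
Qed.

Lemma prob_event_ge (R : realType) r a t : (1 <= a)%N ->
  gamma_partial R r / 2%:R ^+ (a * t) <=
  prob_linmap R (fun A : 'M['F_2]_(r + a + 1, r + t) =>
    (2 ^ a - 2 < #|[set x in nz_points (r + a) | x *m A == 0%R]|)%N).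
Proof.
move=> a_gt0; rewrite prob_linmap_F2.
have two_pow_neq0 k : (2%:R : R) ^+ k != 0 by rewrite expf_neq0 ?pnatr_eq0.
have -> : gamma_partial R r / 2%:R ^+ (a * t) =
    (#|[set B : 'M['F_2]_r | B \in unitmx]| * 2 ^ (r * t) * 2 ^ (a * r) * 2 ^ (r + t))%N%:R
    / 2%:R ^+ ((r + a + 1) * (r + t)).
  rewrite !natrM !natrX natr_card_unitmx_F2.
  rewrite (_ : ((r + a + 1) * (r + t) = r * r + r * t + a * r + (r + t) + a * t)%N); last by ring.
  by rewrite !exprD; field; rewrite !two_pow_neq0.
by rewrite ler_pM2r ?ler_nat ?card_event_ge // invr_gt0 exprn_gt0 ?ltr0n.
Qed.

Theorem propositionB5 (R : realType) (l d a : nat) :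
  (1 <= a)%N -> (d - l <= a)%N -> (a <= d)%N ->
  exists (N : nat) (S : {set 'rV['F_2]_N}),
    [/\ (0 < N)%N, (0 : 'rV['F_2]_N) \notin S, #|S| = (2 ^ d)%N &
      prob_linmap R
        (fun A : 'M['F_2]_(N, l) => (2 ^ a - 2 < #|[set x in S | x *m A == 0%R]|)%N)
      >= gamma_const R ^+ 2 * ((2%:R ^+ d / 2%:R ^+ l) ^+ a) * (2%:R ^+ (a * a))^-1].
Proof.
move=> a_gt0 dl_le_a a_le_d.
have [r d_eq] : exists r, d = (r + a)%N by exists (d - a)%N; lia.
have [t l_eq] : exists t, l = (r + t)%N by exists (l - r)%N; lia.
subst d l.
exists (r + a + 1)%N, (nz_points (r + a)); split.
- by rewrite addn1.
- exact: zero_notin_nz_points.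
- exact: card_nz_points.
rewrite -mulrA expr_ratio_pow_div ?pnatr_eq0 //.
apply: le_trans (prob_event_ge R r a t a_gt0); apply: ler_wpM2r.
  by rewrite invr_ge0 exprn_ge0 ?ler0n.
apply: le_trans (gamma_le_partial R r).
by rewrite expr2 ler_piMr ?gamma_ge0 ?gamma_le1.
Qed.
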